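(* Let $(W,S)$ be a finitely generated Coxeter system, $u\le v$ in $W$, $I=S(u)$, $J=S(v)$. Define $G_v:\mathcal P_I(J)\to[u,v]$ by $G_v(K)=v_K$ and $F:[u,v]\to\mathcal P_I(J)$ by $F(w)=S(w)$ (these are well defined). Then: (a) $G_v\circ F=\mathrm{id}_{[u,v]}$ and $F(G_v(K))\subseteq K$ for all $K\in\mathcal P_I(J)$. (b) $F:([u,v],\le)\to(\mathcal P_I(J),\subseteq)$ is injective and order preserving, and $F(w\vee g)=F(w)\cup F(g)$ for all $w,g\in[u,v]$. (c) $G_v:(\mathcal P_I(J),\subseteq)\to([u,v],\le)$ is surjective and order preserving, and $G_v(K\cap L)=G_v(K)\wedge G_v(L)$ for all $K,L\in\mathcal P_I(J)$. (d) For every $w\in[u,v]$, the fibre $G_v^{-1}(w)$ is closed under $\cup$ and $\cap$ (a sublattice of $\mathcal P_I(J)$), with $\min G_v^{-1}(w)=S(w)$ and $\max G_v^{-1}(w)=J\setminus\mathrm{Des}(v^{S(w)})$, both belonging to $\mathcal P_I(J)$.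
   Context: $(W,S)$ is a finitely generated Coxeter system with length function $\ell$. For $w\in W$, $S(w)\subseteq S$ is the set of simple reflections appearing in a (any) reduced expression of $w$, and $\mathrm{Des}(w)=\{s\in S:\ell(ws)<\ell(w)\}$. For $I\subseteq S$, $W_I$ is the parabolic subgroup generated by $I$, $X_I=\{u\in W:\ell(us)>\ell(u)\ \forall s\in I\}$, and every $w\in W$ factors uniquely as $w=w^Iw_I$ with $w^I\in X_I$, $w_I\in W_I$ (parabolic components along $I$). The partial order on $W$: $u\le v$ iff $v_{S(u)}=u$; the interval $[u,v]$ is a lattice with join $\vee$ and meet $\wedge$. For $I\subseteq J\subseteq S$, $\mathcal P_I(J)=\{K\subseteq S: I\subseteq K\subseteq J\}$ ordered by inclusion. *)

From HB Require Import structures.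
From mathcomp Require Import all_boot.
From mathcomp Require Import boolp.

Set Implicit Arguments.
Unset Strict Implicit.
Unset Printing Implicit Defensive.

Local Open Scope group_scope.

(* A Coxeter matrix on the finite set S: m s t = None encodes m(s,t) = oo. *)
Definition coxeter_matrix (S : finType) (m : S -> S -> option nat) : Prop :=
  forall s t, (m s t = Some 1%N <-> s = t) /\ m s t = m t s /\ m s t <> Some 0%N.

Definition coxeter_rels (S : finType) (H : groupType) (f : S -> H)
    (m : S -> S -> option nat) : Prop :=
  forall s t n, m s t = Some n -> (f s * f t) ^+ n = 1.

Section Coxeter.
Variables (W : groupType) (S : finType) (r : S -> W).

Definition wprod (ws : seq S) : W := foldr (fun s x => r s * x) 1 ws.

(* (W, r(S)) is a Coxeter system: W has the Coxeter presentation
   < S | (st)^m(s,t) = 1 > for some Coxeter matrix m, i.e. r(S) generates W,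
   the relations hold in W, and every assignment S -> H into a group satisfying
   the relations extends to a group homomorphism W -> H. S is a finType, so
   the system is finitely generated. *)
Definition coxeter_system : Prop :=
  exists m : S -> S -> option nat,
    [/\ coxeter_matrix m, coxeter_rels r m,
        (forall w : W, exists ws : seq S, wprod ws = w) &
        (forall (H : groupType) (f : S -> H), coxeter_rels f m ->
           exists phi : W -> H,
             (forall x y, phi (x * y) = phi x * phi y) /\
             (forall s, phi (r s) = f s))].

Definition has_word_of_size (w : W) : pred nat :=
  fun n => `[< exists ws : seq S, size ws = n /\ wprod ws = w >].

Definition clen (w : W) : nat :=
  match pselect (exists n, has_word_of_size w n) with
  | left h => ex_minn h
  | right _ => 0%N
  end.

Definition reduced (ws : seq S) : Prop := size ws = clen (wprod ws).

Definition supp (w : W) : {set S} :=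
  [set s | `[< exists ws, [/\ reduced ws, wprod ws = w & s \in ws] >]].

Definition Des (w : W) : {set S} := [set s | (clen (w * r s) < clen w)%N].

Definition in_parabolic (K : {set S}) (w : W) : Prop :=
  exists ws : seq S, all (fun s => s \in K) ws /\ wprod ws = w.

(* membership in X_K (minimal left coset representatives) *)
Definition in_X (K : {set S}) (x : W) : Prop :=
  forall s, s \in K -> (clen x < clen (x * r s))%N.

(* parabolic components w = w^K w_K, w^K in X_K, w_K in W_K *)
Definition pright (K : {set S}) (w : W) : W :=
  match pselect (exists y, in_parabolic K y /\ in_X K (w * y^-1)) with
  | left h => projT1 (cid h)
  | right _ => 1
  end.

Definition pleft (K : {set S}) (w : W) : W := w * (pright K w)^-1.

Definition cle (x y : W) : Prop := pright (supp x) y = x.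

Definition in_interval (u v w : W) : Prop := cle u w /\ cle w v.

Definition is_join (u v w g x : W) : Prop :=
  [/\ in_interval u v x, cle w x, cle g x &
      forall y, in_interval u v y -> cle w y -> cle g y -> cle x y].

Definition is_meet (u v w g x : W) : Prop :=
  [/\ in_interval u v x, cle x w, cle x g &
      forall y, in_interval u v y -> cle y w -> cle y g -> cle y x].

End Coxeter.

Definition in_PIJ (S : finType) (I J K : {set S}) : bool :=
  (I \subset K) && (K \subset J).

(* Everything rests on one description of the fibres of K |-> v_K: for w in
   [u, v], v_K = w iff S(w) is contained in K and K avoids Des(v w^-1), where
   v w^-1 = v^{S(w)}.  So the fibre of w consists of all K between S(w) and
   J \ Des(v^{S(w)}), which gives (d); together with (v_K)_L = v_L for L in K
   it also gives the order-theoretic statements (a)-(c).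
   This description needs the parabolic theory of Coxeter groups: w lies in W_K
   iff S(w) is contained in K, and l(xz) = l(x) + l(z) for x in X_K and z in
   W_K, whence the factorisation w = w^K w_K is unique.  Both follow from the
   exchange condition, proved with Tits' reflection cocycle, a homomorphism
   from W to a semidirect product of W with the subsets of W; that distinct
   generators give distinct reflections comes from the geometric
   representation. *)

From HB Require Import structures.
From mathcomp Require Import all_boot boolp all_algebra algC cyclotomic.
From mathcomp Require Import ring zify.

Set Implicit Arguments.
Unset Strict Implicit.
Unset Printing Implicit Defensive.

Import GRing.Theory Num.Theory.

Local Open Scope group_scope.

Definition del_nth (T : Type) (i : nat) (s : seq T) := take i s ++ drop i.+1 s.

Lemma size_del_nth (T : Type) i (s : seq T) :
  (i < size s)%N -> size (del_nth i s) = (size s).-1.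
Proof.
move=> hi; rewrite /del_nth size_cat size_take size_drop hi.
by case: (size s) hi => // n hi; rewrite subSS subnKC.
Qed.

Lemma del_nth_subseq (T : eqType) i (s : seq T) : subseq (del_nth i s) s.
Proof.
rewrite /del_nth -{3}(cat_take_drop i s) cat_subseq //.
by rewrite -[i.+1]/(1 + i)%N -drop_drop drop_subseq.
Qed.

Lemma del_nth_cat (T : Type) i (s1 s2 : seq T) :
  del_nth i (s1 ++ s2) =
    if (i < size s1)%N then del_nth i s1 ++ s2 else s1 ++ del_nth (i - size s1) s2.
Proof.
elim: s1 i => [|x s1 IH] i; first by rewrite /= subn0.
case: i => [|i]; first by rewrite /del_nth /= !drop0.
by rewrite /del_nth /= -/(del_nth i (s1 ++ s2)) IH ltnS subSS; case: ifP.
Qed.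

Lemma morph_mul1 (G H : groupType) (phi : G -> H) :
  {morph phi : x y / x * y} -> phi 1 = 1.
Proof. by move=> phiM; apply: (mulgI (phi 1)); rewrite -phiM !mulg1. Qed.

Definition parity := bool.
HB.instance Definition _ := Choice.on parity.
HB.instance Definition _ := isGroup.Build parity addbA addFb addbF addbb addbb.

(** * Tits' reflection cocycle *)

Section TitsExtension.
Variable W : groupType.

(* The semidirect product of W with the group of subsets of W under symmetric
   difference, W acting by conjugation; [te_lift] lifts reflections into it. *)
Record tits_ext := TitsExt { te_elt : W; te_set : W -> bool }.

HB.instance Definition _ := gen_eqMixin tits_ext.
HB.instance Definition _ := gen_choiceMixin tits_ext.

Definition te_mul (x y : tits_ext) :=
  TitsExt (te_elt x * te_elt y) (fun t => te_set x t (+) te_set y (t ^ te_elt x)).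
Definition te_one := TitsExt 1 (fun _ => false).
Definition te_inv (x : tits_ext) :=
  TitsExt (te_elt x)^-1 (fun t => te_set x (t ^ (te_elt x)^-1)).

Lemma te_mulA : associative te_mul.
Proof.
move=> [a f] [b g] [c h]; rewrite /te_mul /=; congr TitsExt; first by rewrite mulgA.
by apply: funext => t; rewrite conjgM addbA.
Qed.

Lemma te_mul1 : left_id te_one te_mul.
Proof.
move=> [a f]; rewrite /te_mul /=; congr TitsExt; first by rewrite mul1g.
by apply: funext => t; rewrite conjg1.
Qed.

Lemma te_mulg1 : right_id te_one te_mul.
Proof.
move=> [a f]; rewrite /te_mul /=; congr TitsExt; first by rewrite mulg1.
by apply: funext => t; rewrite addbF.
Qed.

Lemma te_mulV : left_inverse te_one te_inv te_mul.
Proof.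
move=> [a f]; rewrite /te_mul /=; congr TitsExt; first by rewrite mulVg.
by apply: funext => t; rewrite addbb.
Qed.

Lemma te_mulgV : right_inverse te_one te_inv te_mul.
Proof.
move=> [a f]; rewrite /te_mul /=; congr TitsExt; first by rewrite mulgV.
by apply: funext => t; rewrite conjgK addbb.
Qed.

HB.instance Definition _ :=
  isGroup.Build tits_ext te_mulA te_mul1 te_mulg1 te_mulV te_mulgV.

Lemma te_mulE (x y : tits_ext) : x * y = te_mul x y.
Proof. by []. Qed.

Definition te_lift (c : W) : tits_ext := TitsExt c (fun t => t == c).

End TitsExtension.

Section DihedralLift.
Variables (G : groupType) (a b : G).
Hypotheses (a_invol : a * a = 1) (b_invol : b * b = 1).

Lemma dihedral_mulVr k : a * ((a * b) ^+ k)^-1 = (a * b) ^+ k * a.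
Proof.
have ab_aV : a * (a * b)^-1 = (a * b) * a.
  by rewrite invgM (mulg1_eq a_invol) (mulg1_eq b_invol) !mulgA.
elim: k => [|k IH]; first by rewrite expg0 invg1 mulg1 mul1g.
by rewrite expgSr invgM mulgA ab_aV -mulgA IH mulgA -expgS -expgSr.
Qed.

Lemma conj_dihedral_a k : a ^ ((a * b) ^+ k)^-1 = (a * b) ^+ k.*2 * a.
Proof. by rewrite conjgE invgK dihedral_mulVr mulgA -expgnDr addnn. Qed.

Lemma conj_dihedral_b k : b ^ ((a * b) ^+ k * a)^-1 = (a * b) ^+ k.*2.+1 * a.
Proof.
rewrite conjgE invgK invgM (mulg1_eq a_invol) dihedral_mulVr !mulgA.
by rewrite -(mulgA _ a b) -expgSr -expgnDr addSn addnn.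
Qed.

Lemma te_lift_dihedral_expg k : (te_lift a * te_lift b) ^+ k =
  TitsExt ((a * b) ^+ k)
    (fun t => odd (count (fun j => t == (a * b) ^+ j * a) (iota 0 k.*2))).
Proof.
elim: k => [|k IH] //.
rewrite expgSr IH !te_mulE /te_mul; congr TitsExt; first by rewrite expgSr.
apply: funext => t.
rewrite doubleS -addn2 iotaD count_cat add0n /= !oddD !oddb addbF.
have conj_eq (y c : G) : (t ^ y == c) = (t == c ^ y^-1).
  by apply/eqP/eqP => [<-|->]; [rewrite conjgK | rewrite conjgKV].
by rewrite conj_eq conj_dihedral_a -conjgM conj_eq conj_dihedral_b.
Qed.

(* When (a b)^n = 1 each reflection is counted twice among the first 2n. *)
Lemma te_lift_dihedral_rel n :
  (a * b) ^+ n = 1 -> (te_lift a * te_lift b) ^+ n = 1.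
Proof.
move=> abn; rewrite te_lift_dihedral_expg abn -[RHS]/(te_one G); congr TitsExt.
apply: funext => t; rewrite -addnn iotaD count_cat add0n.
have -> : iota n n = map (addn n) (iota 0 n) by rewrite -iotaDl addn0.
rewrite count_map (@eq_count _ _ (fun j => t == (a * b) ^+ j * a)) ?addnn ?odd_double //.
by move=> j /=; rewrite expgnDr abn mul1g.
Qed.

End DihedralLift.

(** * The geometric representation *)

Lemma scale_regularE (R : pzRingType) (k x : R) : (k *: (x : R^o) = k * x)%R.
Proof. by []. Qed.

Section GeometricRepresentation.
Variables (S : finType) (m : S -> S -> option nat).
Hypothesis Hm : coxeter_matrix m.

Local Open Scope ring_scope.

(* [zeta n] is a primitive 2n-th root of unity, so that [kappa n] plays the
   role of [-2 cos (pi / n)]. *)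
Definition zeta (n : nat) : algC :=
  let: exist z _ := C_prim_root_exists (ltn0Sn (n.*2).-1) in z.

Definition kappa n : algC := - (zeta n + (zeta n)^-1).

Lemma zeta_prim n : (0 < n)%N -> (n.*2).-primitive_root (zeta n).
Proof.
rewrite /zeta; case: (C_prim_root_exists _) => z hz n0.
by rewrite prednK // in hz; rewrite double_gt0.
Qed.

Lemma kappa2 : kappa 2 = 0.
Proof.
have hz := zeta_prim (isT : (0 < 2)%N); set z := zeta 2 in hz *.
have z0 : z != 0 by rewrite (prim_root_eq0 hz).
have z4 : z ^+ 4 = 1 by apply: (prim_expr_order hz).
have z2 : z ^+ 2 != 1 by rewrite -(prim_order_dvd hz).
have : (z ^+ 2 - 1) * (z ^+ 2 + 1) = 0 by rewrite -subr_sqr -exprM z4 expr1n subrr.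
move/eqP; rewrite mulf_eq0 subr_eq0 (negbTE z2) /= => /eqP z2N.
rewrite /kappa -/z (_ : z + z^-1 = (z ^+ 2 + 1) / z); last by field.
by rewrite z2N mul0r oppr0.
Qed.

(* Twice the Tits bilinear form on the basis vectors. *)
Definition tits_form (a c : S) : algC :=
  if a == c then 2 else if m a c is Some n then kappa n else -2.

Lemma tits_formC a c : tits_form a c = tits_form c a.
Proof. by rewrite /tits_form eq_sym (proj1 (proj2 (Hm a c))). Qed.

Lemma tits_form_diag a : tits_form a a = 2.
Proof. by rewrite /tits_form eqxx. Qed.

Local Notation V := {ffun S -> algC^o}.

Definition evec (a : S) : V := [ffun c => (c == a)%:R].
Definition coroot (a : S) (v : V) : algC := \sum_c tits_form a c * v c.
Definition refl (a : S) (v : V) : V := v - coroot a v *: evec a.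

Lemma corootD a k (u v : V) : coroot a (k *: u + v) = k * coroot a u + coroot a v.
Proof.
rewrite /coroot mulr_sumr -big_split /=; apply: eq_bigr => c _.
by rewrite !ffunE /= ?scale_regularE; ring.
Qed.

Lemma coroot_evec a c : coroot a (evec c) = tits_form a c.
Proof.
rewrite /coroot (bigD1 c) //= big1 ?ffunE ?eqxx ?mulr1 ?addr0 //.
by move=> d hd; rewrite ffunE (negbTE hd) mulr0.
Qed.

Lemma coroot_subr_evec a (v : V) k c :
  coroot a (v - k *: evec c) = coroot a v - k * tits_form a c.
Proof.
have -> : v - k *: evec c = (- k) *: evec c + v by rewrite addrC scaleNr.
by rewrite corootD coroot_evec; ring.
Qed.

Lemma reflD a k (u v : V) : refl a (k *: u + v) = k *: refl a u + refl a v.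
Proof. by apply/ffunP => c; rewrite /refl corootD !ffunE /= ?scale_regularE; ring. Qed.

Lemma refl0 a : refl a 0 = 0.
Proof. by rewrite /refl /coroot big1 ?scale0r ?subr0 // => c _; rewrite ffunE mulr0. Qed.

Lemma reflK a : involutive (refl a).
Proof.
move=> v; rewrite {1}/refl coroot_subr_evec tits_form_diag.
by apply/ffunP => c; rewrite /refl !ffunE /= ?scale_regularE; ring.
Qed.

Lemma refl_evec a c : refl a (evec c) = evec c - tits_form a c *: evec a.
Proof. by rewrite /refl coroot_evec. Qed.

Lemma refl_refl a b v : refl a (refl b v) =
  [ffun c => v c - coroot b v * (c == b)%:R
             - (coroot a v - coroot b v * tits_form a b) * (c == a)%:R].
Proof.
apply/ffunP => c; rewrite {1}/refl /refl coroot_subr_evec.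
by rewrite !ffunE /= ?scale_regularE; ring.
Qed.

Section Rotation.
Variables (a b : S) (alpha : algC).
Hypotheses (Bab : tits_form a b = alpha) (Bba : tits_form b a = alpha).

Definition rot (v : V) := refl a (refl b v).
Definition plane (x y : algC) : V := x *: evec a + y *: evec b.
Definition rot_sum (n : nat) (u : V) : V := \sum_(j < n) iter j rot u.

Lemma rotD k u v : rot (k *: u + v) = k *: rot u + rot v.
Proof. by rewrite /rot !reflD. Qed.

Lemma iter_rotD j k u v : iter j rot (k *: u + v) = k *: iter j rot u + iter j rot v.
Proof. by elim: j => [|j IH] //=; rewrite IH rotD. Qed.

Lemma rot_sumD n k u v : rot_sum n (k *: u + v) = k *: rot_sum n u + rot_sum n v.
Proof.
rewrite /rot_sum scaler_sumr -big_split /=.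
by apply: eq_bigr => j _; rewrite iter_rotD.
Qed.

Lemma rot_subr v : rot v - v = plane (coroot b v * alpha - coroot a v) (- coroot b v).
Proof.
rewrite /rot refl_refl Bab; apply/ffunP => c.
by rewrite /plane !ffunE /= ?scale_regularE; ring.
Qed.

Lemma coroot_plane c x y : coroot c (plane x y) = x * tits_form c a + y * tits_form c b.
Proof.
rewrite /plane corootD -[y *: _]addr0 corootD !coroot_evec.
by rewrite [coroot c 0]big1 ?addr0 // => d _; rewrite ffunE mulr0.
Qed.

Lemma rot_plane x y :
  rot (plane x y) = plane ((alpha ^+ 2 - 1) * x + alpha * y) (- alpha * x - y).
Proof.
rewrite /rot refl_refl !coroot_plane Bab Bba !tits_form_diag.
by apply/ffunP => c; rewrite /plane !ffunE /= ?scale_regularE; ring.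
Qed.

Lemma rot_sum_eigen n w (z : algC) :
  rot w = z *: w -> \sum_(j < n) z ^+ j = 0 -> rot_sum n w = 0.
Proof.
move=> rotw zsum; have iter_w j : iter j rot w = z ^+ j *: w.
  elim: j => [|j IH] /=; first by rewrite scale1r.
  by rewrite IH -[_ *: w]addr0 rotD /rot !refl0 addr0 -/(rot w) rotw scalerA exprSr.
rewrite /rot_sum; under eq_bigr => j _ do rewrite iter_w.
by rewrite -scaler_suml zsum scale0r.
Qed.

(* On the plane [rot] is annihilated by X^2 - (alpha^2 - 2) X + 1, with roots
   [lam] and [lam^-1]: [rot_sum n] kills the two eigenvectors, hence the plane. *)
Lemma rot_sum_plane n (lam : algC) x y :
  lam != 0 -> lam != 1 -> lam != lam^-1 -> lam ^+ n = 1 ->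
  alpha ^+ 2 - 2 = lam + lam^-1 -> rot_sum n (plane x y) = 0.
Proof.
move=> lam0 lam1 lamV lamn alpha_lam; set u := plane x y.
have geom_sum (z : algC) : z ^+ n = 1 -> z != 1 -> \sum_(j < n) z ^+ j = 0.
  move=> zn z1; apply/eqP; move: (subrX1 z n); rewrite zn subrr => /esym/eqP.
  by rewrite mulf_eq0 subr_eq0 (negbTE z1).
have rot2 : rot (rot u) = (alpha ^+ 2 - 2) *: rot u - u.
  rewrite /u !rot_plane; apply/ffunP => c.
  by rewrite /plane !ffunE /= ?scale_regularE; ring.
have eig1 : rot_sum n ((- lam^-1) *: u + rot u) = 0.
  apply: (rot_sum_eigen (z := lam)); last by apply: geom_sum.
  rewrite rotD rot2 alpha_lam; apply/ffunP => c.
  by rewrite !ffunE /= ?scale_regularE; field.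
have eig2 : rot_sum n ((- lam) *: u + rot u) = 0.
  apply: (rot_sum_eigen (z := lam^-1)); last first.
    by apply: geom_sum; rewrite ?exprVn ?lamn ?invr1 // invr_eq1.
  rewrite rotD rot2 alpha_lam; apply/ffunP => c.
  by rewrite !ffunE /= ?scale_regularE; field.
rewrite rot_sumD in eig1; rewrite rot_sumD in eig2.
have : (lam - lam^-1) *: rot_sum n u = 0.
  transitivity (((- lam^-1) *: rot_sum n u + rot_sum n (rot u))
                - ((- lam) *: rot_sum n u + rot_sum n (rot u))).
    by apply/ffunP => c; rewrite !ffunE /= ?scale_regularE; ring.
  by rewrite eig1 eig2 subrr.
by move/eqP; rewrite scaler_eq0 subr_eq0 (negbTE lamV) => /eqP.
Qed.

Lemma iter_rot_id n :
  (forall x y, rot_sum n (plane x y) = 0) -> forall v, iter n rot v = v.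
Proof.
move=> rot_sum_plane0 v; apply/eqP; rewrite -subr_eq0.
have iter_sub j : iter j rot (rot v - v) = iter j.+1 rot v - iter j rot v.
  by rewrite addrC -scaleN1r iter_rotD scaleN1r addrC iterSr.
have -> : iter n rot v - v = rot_sum n (rot v - v).
  rewrite /rot_sum; under eq_bigr => j _ do rewrite iter_sub.
  by rewrite -(big_mkord xpredT (fun j => iter j.+1 rot v - iter j rot v)) telescope_sumr.
by rewrite rot_subr rot_sum_plane0.
Qed.

Lemma rot_invol : alpha = 0 -> forall v, rot (rot v) = v.
Proof.
move=> alpha0 v.
have refl_comm w : refl a (refl b w) = refl b (refl a w).
  by rewrite !refl_refl Bab Bba alpha0; apply/ffunP => c; rewrite !ffunE; ring.
by rewrite /rot refl_comm reflK reflK.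
Qed.

End Rotation.

Lemma iter_rot_rel a b n : m a b = Some n -> forall v, iter n (rot a b) v = v.
Proof.
move=> mab v; have [ab|ab] := eqVneq a b.
  subst b; move: mab; rewrite (proj2 (proj1 (Hm a a)) erefl) => -[<-].
  by rewrite /= /rot reflK.
have n1 : n <> 1%N.
  by move=> n1; move/eqP: ab; apply; apply: (proj1 (proj1 (Hm a b))); rewrite mab n1.
have n0 : n <> 0%N by move=> n0; apply: (proj2 (proj2 (Hm a b))); rewrite mab n0.
have Bab : tits_form a b = kappa n by rewrite /tits_form (negbTE ab) mab.
have Bba : tits_form b a = kappa n by rewrite tits_formC.
have [n2|n2] := eqVneq n 2%N; first by subst n; exact: rot_invol Bab Bba kappa2 v.
have n3 : (2 < n)%N by case: n n1 n0 n2 {mab Bab Bba} => [|[|[|n]]].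
have hz := zeta_prim (ltnW (ltnW n3)); set z := zeta n in hz Bab Bba.
have z0 : z != 0 by rewrite (prim_root_eq0 hz) -lt0n double_gt0 (ltnW (ltnW n3)).
have z_order k : (0 < k < n.*2)%N -> z ^+ k != 1.
  by case/andP=> k0 kn; rewrite -(prim_order_dvd hz); apply/negP => /(dvdn_leq k0); lia.
(* the eigenvalues of [rot a b] on the plane are [z^2] and [z^-2] *)
set lam := z ^+ 2.
have lam0 : lam != 0 by rewrite /lam expf_neq0.
have lam1 : lam != 1 by apply: z_order; lia.
have lamV : lam != lam^-1.
  apply: contraNneq (z_order 4%N _) => [lamV|]; last lia.
  by rewrite (exprM z 2 2) -/lam expr2 {1}lamV mulVf.
apply: (iter_rot_id Bab) => x y; apply: (rot_sum_plane Bab Bba x y lam0 lam1 lamV).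
- by rewrite -exprM mul2n (prim_expr_order hz).
- by rewrite /kappa /lam -/z; field.
Qed.

End GeometricRepresentation.

Section BijectionGroup.
Variable T : Type.

Record bij := Bij {
  bij_fun : T -> T; bij_inv : T -> T;
  bij_funK : cancel bij_fun bij_inv; bij_invK : cancel bij_inv bij_fun }.

HB.instance Definition _ := gen_eqMixin bij.
HB.instance Definition _ := gen_choiceMixin bij.

Lemma bij_eq (x y : bij) : bij_fun x = bij_fun y -> x = y.
Proof.
case: x y => f g fK gK [f' g' fK' gK'] /= eqf; subst f'.
have eqg : g = g' by apply: funext => v; rewrite -{1}(gK' v) fK.
by subst g'; congr Bij; apply: Prop_irrelevance.
Qed.

Definition bij_mul (x y : bij) : bij.
Proof.
refine (@Bij (bij_fun x \o bij_fun y) (bij_inv y \o bij_inv x) _ _) => v /=.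
- by rewrite !bij_funK.
- by rewrite !bij_invK.
Defined.

Definition bij_one : bij := @Bij id id (fun _ => erefl) (fun _ => erefl).
Definition bij_invg (x : bij) : bij := Bij (@bij_invK x) (@bij_funK x).

Lemma bij_mulA : associative bij_mul. Proof. by move=> x y z; apply: bij_eq. Qed.
Lemma bij_mul1 : left_id bij_one bij_mul. Proof. by move=> x; apply: bij_eq. Qed.
Lemma bij_mulg1 : right_id bij_one bij_mul. Proof. by move=> x; apply: bij_eq. Qed.
Lemma bij_mulV : left_inverse bij_one bij_invg bij_mul.
Proof. by move=> x; apply: bij_eq; apply: funext => v /=; rewrite bij_funK. Qed.
Lemma bij_mulgV : right_inverse bij_one bij_invg bij_mul.
Proof. by move=> x; apply: bij_eq; apply: funext => v /=; rewrite bij_invK. Qed.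

HB.instance Definition _ :=
  isGroup.Build bij bij_mulA bij_mul1 bij_mulg1 bij_mulV bij_mulgV.

Lemma bij_funX (x : bij) n : bij_fun (x ^+ n)%g = iter n (bij_fun x).
Proof. by elim: n => [|n IH] //; rewrite expgS; apply: funext => v /=; rewrite IH. Qed.

End BijectionGroup.

Lemma coxeter_matrix_faithful (S : finType) (m : S -> S -> option nat) :
  coxeter_matrix m ->
  exists (H : groupType) (f : S -> H), coxeter_rels f m /\ injective f.
Proof.
move=> Hm; pose f a : bij {ffun S -> algC^o} := Bij (@reflK S m a) (@reflK S m a).
exists (bij {ffun S -> algC^o}), f; split.
  move=> a b n mab; apply: bij_eq; rewrite bij_funX; apply: funext => v.
  exact: (iter_rot_rel Hm mab).
move=> a b fab; apply/eqP; apply: contraT => ab.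
have := congr1 (fun x => bij_fun x (evec a) a) fab => /=.
rewrite !refl_evec !ffunE /= !scale_regularE eqxx (negbTE ab) tits_form_diag.
by rewrite !mulr1 !mulr0 => /addrI/eqP; rewrite eqr_opp pnatr_eq0.
Qed.

(** * Length, exchange condition and parabolic subgroups *)

Section CoxeterSystem.
Variables (W : groupType) (S : finType) (r : S -> W) (m : S -> S -> option nat).
Hypothesis Hm : coxeter_matrix m.
Hypothesis Hrel : coxeter_rels r m.
Hypothesis Hgen : forall w : W, exists ws : seq S, wprod r ws = w.
Hypothesis Huniv : forall (H : groupType) (f : S -> H), coxeter_rels f m ->
  exists phi : W -> H, {morph phi : x y / x * y} /\ (forall s, phi (r s) = f s).

Local Notation wp := (wprod r).
Local Notation l := (clen r).

Lemma mul_gen s : r s * r s = 1.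
Proof. by have := Hrel (proj2 (proj1 (Hm s s)) erefl); rewrite expg1. Qed.

Lemma inv_gen s : (r s)^-1 = r s.
Proof. exact/mulg1_eq/mul_gen. Qed.

Lemma wprod_cat ws vs : wp (ws ++ vs) = wp ws * wp vs.
Proof. by elim: ws => [|s ws IH] /=; rewrite ?mul1g // IH mulgA. Qed.

Lemma wprod_rcons ws s : wp (rcons ws s) = wp ws * r s.
Proof. by rewrite -cats1 wprod_cat /= mulg1. Qed.

Lemma wprod_rev ws : wp (rev ws) = (wp ws)^-1.
Proof.
elim: ws => [|s ws IH] /=; first by rewrite invg1.
by rewrite rev_cons wprod_rcons IH invgM inv_gen.
Qed.

Lemma clen_le_size ws : (l (wp ws) <= size ws)%N.
Proof.
rewrite /clen; case: pselect => [h|] //.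
by case: ex_minnP => n _; apply; apply/asboolP; exists ws.
Qed.

Lemma reduced_word_exists w : exists ws, size ws = l w /\ wp ws = w.
Proof.
rewrite /clen; case: pselect => [h|nh]; last first.
  by case: nh; have [ws <-] := Hgen w; exists (size ws); apply/asboolP; exists ws.
by case: ex_minnP => n /asboolP [ws [? ?]] _; exists ws.
Qed.

Lemma clen1 : l 1 = 0%N.
Proof. by apply/eqP; rewrite -leqn0; apply: (clen_le_size [::]). Qed.

Lemma clen_eq0 w : l w = 0%N -> w = 1.
Proof.
move=> lw0; have [[|s ws] [ws_size <-]] := reduced_word_exists w => //.
by rewrite lw0 in ws_size.
Qed.

Lemma leq_clenM x y : (l (x * y) <= l x + l y)%N.
Proof.
have [xs [<- <-]] := reduced_word_exists x; have [ys [<- <-]] := reduced_word_exists y.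
by rewrite -size_cat -wprod_cat clen_le_size.
Qed.

Lemma clenV w : l w^-1 = l w.
Proof.
have leq_clenV x : (l x^-1 <= l x)%N.
  have [xs [<- <-]] := reduced_word_exists x.
  by rewrite -wprod_rev -(size_rev xs) clen_le_size.
by apply/eqP; rewrite eqn_leq leq_clenV /= -{1}(invgK w) leq_clenV.
Qed.

Lemma clen_mulr_le w s : (l (w * r s) <= (l w).+1)%N.
Proof.
apply: leq_trans (leq_clenM _ _) _; rewrite -addn1 leq_add2l.
by have := clen_le_size [:: s]; rewrite /= mulg1.
Qed.

Lemma clen_mulr_ge w s : (l w <= (l (w * r s)).+1)%N.
Proof. by rewrite -{1}(mulg1 w) -(mul_gen s) mulgA clen_mulr_le. Qed.

Lemma odd_clen_mulr w s : odd (l (w * r s)) = ~~ odd (l w).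
Proof.
have sgn_rels : coxeter_rels (fun=> true : parity) m by move=> ? ? n _; exact: expg1n.
have [sgn [sgnM sgn_gen]] := Huniv sgn_rels.
have sgn_wprod ws : sgn (wp ws) = odd (size ws).
  elim: ws => [|t ws IH] /=; first exact: morph_mul1 sgnM.
  by rewrite sgnM IH sgn_gen.
have odd_clen x : odd (l x) = sgn x.
  by have [xs [<- <-]] := reduced_word_exists x; rewrite sgn_wprod.
by rewrite !odd_clen sgnM sgn_gen; exact: addbT.
Qed.

Lemma clen_mulr w s : l (w * r s) = (l w).+1 \/ (l (w * r s)).+1 = l w.
Proof.
have le1 := clen_mulr_le w s; have ge1 := clen_mulr_ge w s; have odd1 := odd_clen_mulr w s.
case: (ltngtP (l (w * r s)) (l w)) => cmp.
- by right; apply/eqP; rewrite eqn_leq cmp ge1.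
- by left; apply/eqP; rewrite eqn_leq cmp le1.
- by move: odd1; rewrite cmp; case: (odd _).
Qed.

Lemma clen_gen s : l (r s) = 1%N.
Proof.
have := odd_clen_mulr 1 s; rewrite mul1g clen1 /= => odd1.
by have := clen_mulr_le 1 s; rewrite mul1g clen1; case: (l (r s)) odd1 => [|[|]].
Qed.

Lemma notin_Des x s : (s \notin Des r x) = (l x < l (x * r s))%N.
Proof.
rewrite inE -leqNgt; case: (clen_mulr x s) => [->|<-]; first by rewrite leqnSn ltnSn.
by rewrite ltnn ltnNge leqnSn.
Qed.

Section ReflectionCocycle.
Variable phi : W -> tits_ext W.
Hypothesis phiM : {morph phi : x y / x * y}.
Hypothesis phi_gen : forall s, phi (r s) = te_lift (r s).

Lemma te_elt_phi w : te_elt (phi w) = w.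
Proof.
have [ws <-] := Hgen w; elim: ws => [|s ws IH] /=; first by rewrite (morph_mul1 phiM).
by rewrite phiM phi_gen te_mulE /= IH.
Qed.

(* Tits' reflection cocycle N(w), evaluated at the reflection [t]. *)
Definition crossed w t := te_set (phi w) t.

Lemma crossedM x y t : crossed (x * y) t = crossed x t (+) crossed y (t ^ x).
Proof. by rewrite /crossed phiM te_mulE /= te_elt_phi. Qed.

Lemma crossed_del_nth ws t :
  crossed (wp ws) t -> exists2 i, (i < size ws)%N & t * wp ws = wp (del_nth i ws).
Proof.
elim: ws t => [|s ws IH] t /=; first by rewrite /crossed (morph_mul1 phiM).
rewrite crossedM /crossed phi_gen /= -/(crossed _ _); case: eqP => [->|_] /=.
  by move=> _; exists 0%N => //; rewrite /del_nth /= drop0 mulgA mul_gen mul1g.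
move=> /IH [i lt_i_ws eq_t]; exists i.+1 => //.
by rewrite /del_nth /= -/(del_nth i ws) -eq_t conjgE inv_gen !mulgA mul_gen mul1g.
Qed.

End ReflectionCocycle.

Lemma exchange ws s : (l (wp ws * r s) < l (wp ws))%N ->
  exists2 i, (i < size ws)%N & wp ws * r s = wp (del_nth i ws).
Proof.
have [phi [phiM phi_gen]] : exists phi : W -> tits_ext W,
    {morph phi : x y / x * y} /\ forall s, phi (r s) = te_lift (r s).
  by apply: Huniv => a b n mab; apply: te_lift_dihedral_rel; rewrite ?mul_gen ?Hrel.
set w := wp ws => lt_ws; set t := r s ^ w^-1.
have tw : t * w = w * r s by rewrite /t conjgE invgK -!mulgA mulVg mulg1.
case crossed_t: (crossed phi w t).
  by have [i ? eq_i] := crossed_del_nth phiM phi_gen crossed_t; exists i; rewrite -?tw.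
(* otherwise [t] is crossed by a reduced word for [w * r s], which then is not reduced *)
have [vs [vs_size eq_vs]] := reduced_word_exists (w * r s).
have crossed_vs : crossed phi (wp vs) t.
  by rewrite eq_vs (crossedM phiM phi_gen) crossed_t /crossed phi_gen /= /t conjgKV.
have [i lt_i_vs] := crossed_del_nth phiM phi_gen crossed_vs.
rewrite eq_vs mulgA tw -mulgA mul_gen mulg1 => eq_i.
have := clen_le_size (del_nth i vs); rewrite -eq_i size_del_nth // vs_size.
by move=> /leq_trans/(_ (leq_pred _)); rewrite leqNgt lt_ws.
Qed.

Lemma reduced_subword ws :
  exists vs, [/\ subseq vs ws, wp vs = wp ws & size vs = l (wp ws)].
Proof.
elim/last_ind: ws => [|ws s [vs [sub_vs eq_vs vs_size]]].
  by exists [::]; rewrite /= clen1.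
rewrite wprod_rcons; case: (clen_mulr (wp ws) s) => ls.
  exists (rcons vs s); split; first by rewrite -!cats1 cat_subseq.
    by rewrite wprod_rcons eq_vs.
  by rewrite size_rcons vs_size ls.
have [i lt_i_vs eq_i] : exists2 i, (i < size vs)%N & wp vs * r s = wp (del_nth i vs).
  by apply: exchange; rewrite eq_vs -ls.
exists (del_nth i vs); split.
- exact: subseq_trans (del_nth_subseq i vs) (subseq_trans sub_vs (subseq_rcons ws s)).
- by rewrite -eq_i eq_vs.
- by rewrite size_del_nth // vs_size -ls.
Qed.

Lemma gen_inj : injective r.
Proof.
have [H [f [f_rels f_inj]]] := coxeter_matrix_faithful Hm.
have [phi [_ phi_gen]] := Huniv f_rels.
by move=> a b eq_ab; apply: f_inj; rewrite -!phi_gen eq_ab.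
Qed.

Lemma reduced_rcons ws s : reduced r (rcons ws s) -> reduced r ws.
Proof.
rewrite /reduced size_rcons wprod_rcons => red; apply/eqP.
by rewrite eqn_leq clen_le_size /= -ltnS red clen_mulr_le.
Qed.

Local Notation par := (in_parabolic r).
Implicit Types (K L : {set S}).

Lemma parabolic1 K : par K 1.
Proof. by exists [::]. Qed.

Lemma parabolicM K x y : par K x -> par K y -> par K (x * y).
Proof.
move=> [xs [xsK <-]] [ys [ysK <-]]; exists (xs ++ ys).
by rewrite all_cat xsK ysK wprod_cat.
Qed.

Lemma parabolicV K x : par K x -> par K x^-1.
Proof. by move=> [xs [xsK <-]]; exists (rev xs); rewrite all_rev xsK wprod_rev. Qed.

Lemma parabolic_gen K s : s \in K -> par K (r s).
Proof. by move=> sK; exists [:: s]; rewrite /= sK mulg1. Qed.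

Lemma parabolicS K L x : K \subset L -> par K x -> par L x.
Proof.
move=> /subsetP KL [xs [xsK <-]]; exists xs; split => //.
by apply/allP => s /(allP xsK)/KL.
Qed.

Lemma parabolic_reduced_word K w :
  par K w -> exists ws, [/\ all (mem K) ws, wp ws = w & size ws = l w].
Proof.
move=> [ws [wsK <-]]; have [vs [sub_vs eq_vs vs_size]] := reduced_subword ws.
by exists vs; split => //; apply/allP => s /(mem_subseq sub_vs)/(allP wsK).
Qed.

Lemma parabolic_genP K s : par K (r s) -> s \in K.
Proof.
move=> /parabolic_reduced_word [ws [wsK eq_ws]]; rewrite clen_gen.
case: ws wsK eq_ws => [|t [|]] //= tK; rewrite mulg1 => /gen_inj <-.
by rewrite andbT in tK.
Qed.

Lemma reduced_parabolic K w ws :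
  par K w -> reduced r ws -> wp ws = w -> all (mem K) ws.
Proof.
elim/last_ind: ws w => [|ws s IH] w // wK red eq_w.
have red_ws := reduced_rcons red.
have ws_eq : wp ws = w * r s by rewrite -eq_w wprod_rcons -mulgA mul_gen mulg1.
have lt_ws : (l (w * r s) < l w)%N.
  by rewrite -ws_eq -red_ws -eq_w -red size_rcons.
have [vs [vsK eq_vs vs_size]] := parabolic_reduced_word wK.
have [i _ eq_i] : exists2 i, (i < size vs)%N & wp vs * r s = wp (del_nth i vs).
  by apply: exchange; rewrite eq_vs.
have wsK : par K (wp ws).
  rewrite ws_eq -eq_vs eq_i; exists (del_nth i vs); split => //.
  by apply/allP => t /(mem_subseq (del_nth_subseq i vs))/(allP vsK).
rewrite all_rcons (IH _ wsK red_ws erefl) andbT.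
apply: parabolic_genP; have -> : r s = (wp ws)^-1 * w by rewrite -eq_w wprod_rcons mulKg.
exact: parabolicM (parabolicV wsK) wK.
Qed.

Lemma suppP w s :
  reflect (exists ws, [/\ reduced r ws, wp ws = w & s \in ws]) (s \in supp r w).
Proof. by rewrite inE; apply: (iffP (asboolP _)). Qed.

Lemma parabolic_supp K w : par K w <-> supp r w \subset K.
Proof.
split=> [wK|/subsetP suppK].
  apply/subsetP => s /suppP [ws [red eq_ws s_ws]].
  exact: (allP (reduced_parabolic wK red eq_ws)).
have [ws [ws_size eq_ws]] := reduced_word_exists w; exists ws; split => //.
by apply/allP => s s_ws; apply/suppK/suppP; exists ws; rewrite /reduced eq_ws ws_size.
Qed.

Lemma parabolic_last_letter K y : par K y -> y != 1 ->
  exists y' s, [/\ s \in K, par K y', y = y' * r s & l y = (l y').+1].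
Proof.
move=> yK y_neq1; have [ys [ys_size eq_ys]] := reduced_word_exists y.
have red : reduced r ys by rewrite /reduced eq_ys.
have := reduced_parabolic yK red eq_ys.
case/lastP: ys ys_size eq_ys red => [|ys s] ys_size eq_ys red.
  by rewrite -eq_ys eqxx in y_neq1.
rewrite all_rcons => /andP [sK ysK]; exists (wp ys), s; split => //.
- by exists ys.
- by rewrite -eq_ys wprod_rcons.
- by rewrite -ys_size size_rcons (reduced_rcons red).
Qed.

Lemma coset_min_exists K w : exists2 x, (exists2 y, par K y & w = x * y) &
  forall z, par K z -> (l x <= l (x * z))%N.
Proof.
pose in_coset n := `[< exists x, l x = n /\ exists2 y, par K y & w = x * y >].
have [|n] := @ex_minnP in_coset.
  exists (l w); apply/asboolP; exists w; split=> //.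
  by exists 1; [exact: parabolic1 | rewrite mulg1].
move=> /asboolP [x [<- [y yK eq_w]]] minx; exists x; first by exists y.
move=> z zK; apply/minx/asboolP; exists (x * z); split=> //.
by exists (z^-1 * y); [exact: parabolicM (parabolicV zK) yK | rewrite mulgA mulgK].
Qed.

Lemma clen_mul_parabolic K x z : (forall z, par K z -> (l x <= l (x * z))%N) ->
  par K z -> l (x * z) = (l x + l z)%N.
Proof.
move=> minx zK; have [k lz] : exists k, l z = k by exists (l z).
rewrite lz; elim: k z lz zK => [|k IH] z lz zK.
  by rewrite (clen_eq0 lz) mulg1 addn0.
have z_neq1 : z != 1 by apply/eqP => z1; move: lz; rewrite z1 clen1.
have [z' [s [sK z'K eq_z]]] := parabolic_last_letter zK z_neq1.
rewrite lz => -[lz'].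
have IHz' := IH z' (esym lz') z'K.
case: (clen_mulr (x * z') s) => [lxz|lxz]; first by rewrite eq_z mulgA lxz IHz' addnS.
have [xs [xs_size eq_xs]] := reduced_word_exists x.
have [zs [zs_size eq_zs]] := reduced_word_exists z'.
have [i lt_i eq_i] : exists2 i, (i < size (xs ++ zs))%N &
    wp (xs ++ zs) * r s = wp (del_nth i (xs ++ zs)).
  by apply: exchange; rewrite wprod_cat eq_xs eq_zs -lxz.
move: eq_i; rewrite del_nth_cat wprod_cat eq_xs eq_zs.
case: ifP => [lt_i_xs|ge_i_xs]; rewrite wprod_cat ?eq_xs ?eq_zs => eq_i.
- (* deleting a letter of x yields a shorter element of x W_K *)
  have := minx _ (parabolicM (parabolicM z'K (parabolic_gen sK)) (parabolicV z'K)).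
  have -> : x * (z' * r s * z'^-1) = wp (del_nth i xs) by rewrite !mulgA eq_i mulgK.
  rewrite leqNgt => /negP[].
  by apply: leq_ltn_trans (clen_le_size _) _; rewrite size_del_nth // -xs_size; lia.
- (* deleting a letter of z' contradicts l z = l z' + 1 *)
  have eq_z' : z' * r s = wp (del_nth (i - size xs) zs).
    by move: eq_i; rewrite -mulgA => /mulgI.
  have := clen_le_size (del_nth (i - size xs) zs); rewrite -eq_z' -eq_z lz size_del_nth.
    by rewrite zs_size -lz' ltnNge leq_pred.
  by move: lt_i ge_i_xs; rewrite size_cat; lia.
Qed.

Local Notation inX := (in_X r).

Lemma clen_X_parabolic K x z : inX K x -> par K z -> l (x * z) = (l x + l z)%N.
Proof.
move=> xX zK; have [x0 [y0 y0K eq_x] minx0] := coset_min_exists K x.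
suff y0_eq1 : y0 = 1 by rewrite eq_x y0_eq1 mulg1 (clen_mul_parabolic minx0 zK).
apply/eqP; apply: contraT => y0_neq1.
have [y' [s [sK y'K eq_y0 ly0]]] := parabolic_last_letter y0K y0_neq1.
have xs_eq : x * r s = x0 * y' by rewrite eq_x eq_y0 -!mulgA mul_gen mulg1.
have := xX s sK; rewrite xs_eq eq_x !(clen_mul_parabolic minx0) //.
by rewrite ly0 addnS ltnNge leqnSn.
Qed.

Lemma X_parabolic_unique K x x' y y' : inX K x -> inX K x' -> par K y -> par K y' ->
  x * y = x' * y' -> y = y'.
Proof.
move=> xX x'X yK y'K eq_xy; have yy'K := parabolicM yK (parabolicV y'K).
have eq_x' : x' = x * (y / y') by rewrite mulgA eq_xy mulgK.
have eq_x : x = x' * (y / y')^-1 by rewrite eq_x' mulgK.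
have lx' := clen_X_parabolic xX yy'K; rewrite -eq_x' in lx'.
have lx := clen_X_parabolic x'X (parabolicV yy'K); rewrite -eq_x clenV in lx.
by apply/divg1_eq/clen_eq0; lia.
Qed.

Local Notation pr := (pright r).

Lemma pright_spec K w : par K (pr K w) /\ inX K (w / pr K w).
Proof.
rewrite /pright; case: pselect => [ex|nex]; first exact: (projT2 (cid ex)).
case: nex; have [x [y yK eq_w] minx] := coset_min_exists K w.
exists y; split=> //; rewrite eq_w mulgK => s sK.
by rewrite (clen_mul_parabolic minx (parabolic_gen sK)) clen_gen addn1 ltnSn.
Qed.

Lemma pright_uniq K w y : par K y -> inX K (w / y) -> pr K w = y.
Proof.
move=> yK yX; have [prK prX] := pright_spec K w.
by apply: (X_parabolic_unique prX yX) => //; rewrite !mulgVK.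
Qed.

Lemma pright_pright K L w : L \subset K -> pr L (pr K w) = pr L w.
Proof.
move=> LK; have [yK yX] := pright_spec K w; have [zL zX] := pright_spec L (pr K w).
move: (pr K w) yK yX zL zX => y yK yX; move: (pr L y) => z zL zX.
symmetry; apply: pright_uniq => //.
have yzK : par K (y / z) by apply: parabolicM => //; apply/parabolicV/(parabolicS LK).
move=> s sL; have yzsK := parabolicM yzK (parabolic_gen (subsetP LK s sL)).
have eq_w a : w / z * a = w / y * (y / z * a) by rewrite !mulgA mulgVK.
rewrite -{1}(mulg1 (w / z)) !eq_w mulg1.
by rewrite (clen_X_parabolic yX yzK) (clen_X_parabolic yX yzsK) ltn_add2l zX.
Qed.

Lemma supp_pright K w : supp r (pr K w) \subset K.
Proof. by apply/parabolic_supp; case: (pright_spec K w). Qed.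

(* Reduced words of the two parabolic components of [w] concatenate to a
   reduced word of [w]. *)
Lemma supp_pright_supp K w : supp r (pr K w) \subset supp r w.
Proof.
have [yK yX] := pright_spec K w; move: (pr K w) yK yX => y yK yX.
have lw := clen_X_parabolic yX yK; rewrite mulgVK in lw.
apply/subsetP => s /suppP [ys [red eq_ys s_ys]].
have [xs [xs_size eq_xs]] := reduced_word_exists (w / y).
apply/suppP; exists (xs ++ ys); rewrite mem_cat s_ys orbT !wprod_cat eq_xs eq_ys mulgVK.
by rewrite /reduced size_cat xs_size red wprod_cat eq_xs eq_ys mulgVK lw.
Qed.

Lemma cle_supp x y : cle r x y -> supp r x \subset supp r y.
Proof. by rewrite /cle => <-; exact: supp_pright_supp. Qed.

Lemma in_X_Des K x : inX K x <-> K \subset ~: Des r x.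
Proof.
split=> [xX|/subsetP KD s sK]; last by rewrite -notin_Des -in_setC KD.
by apply/subsetP => s sK; rewrite in_setC notin_Des xX.
Qed.

Lemma pright_eqP K w y :
  pr K w = y <-> supp r y \subset K /\ K \subset ~: Des r (w / y).
Proof.
split=> [<-|[yK /in_X_Des yX]].
  by have [/parabolic_supp ? /in_X_Des ?] := pright_spec K w.
exact/pright_uniq/yX/parabolic_supp.
Qed.

Lemma pright_supp_pright K w : pr (supp r (pr K w)) w = pr K w.
Proof.
have [yK yD] := proj1 (pright_eqP K w (pr K w)) erefl.
by apply/pright_eqP; split=> //; apply: subset_trans yK yD.
Qed.

Lemma cle_pright K L w : K \subset L -> cle r (pr K w) (pr L w).
Proof.
move=> KL; rewrite /cle pright_pright ?pright_supp_pright //.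
exact: subset_trans (supp_pright K w) KL.
Qed.

Lemma pright_setU K L w y : pr K w = y -> pr L w = y -> pr (K :|: L) w = y.
Proof.
move=> /pright_eqP [yK KD] /pright_eqP [_ LD].
by apply/pright_eqP; rewrite subUset KD LD (subset_trans yK (subsetUl K L)).
Qed.

Lemma pright_setI K L w y : pr K w = y -> pr L w = y -> pr (K :&: L) w = y.
Proof.
move=> /pright_eqP [yK KD] /pright_eqP [yL _].
by apply/pright_eqP; rewrite subsetI yK yL (subset_trans (subsetIl K L) KD).
Qed.

(** * The interval [u, v] *)

Section Interval.
Variables u v : W.
Hypothesis Huv : cle r u v.

Local Notation inI := (in_interval r u v).
Local Notation inP := (in_PIJ (supp r u) (supp r v)).

Lemma supp_in_PIJ w : inI w -> inP (supp r w).
Proof. by case=> uw wv; rewrite /in_PIJ (cle_supp uw) (cle_supp wv). Qed.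

Lemma pright_in_interval K : inP K -> inI (pr K v).
Proof.
case/andP=> uK _; split; last exact: pright_supp_pright.
by rewrite /cle pright_pright.
Qed.

Lemma pright_supp_interval w : inI w -> pr (supp r w) v = w.
Proof. by case. Qed.

Lemma supp_inj_interval w g : inI w -> inI g -> supp r w = supp r g -> w = g.
Proof.
move=> wI gI eq_supp.
by rewrite -(pright_supp_interval wI) eq_supp pright_supp_interval.
Qed.

Lemma pright_surj_interval w : inI w -> exists K, inP K /\ pr K v = w.
Proof. by move=> wI; exists (supp r w); rewrite supp_in_PIJ ?pright_supp_interval. Qed.

Lemma is_join_pright w g :
  inI w -> inI g -> is_join r u v w g (pr (supp r w :|: supp r g) v).
Proof.
move=> wI gI; have /andP [uw wv] := supp_in_PIJ wI; have /andP [_ gv] := supp_in_PIJ gI.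
split.
- apply: pright_in_interval.
  by rewrite /in_PIJ subUset wv gv (subset_trans uw (subsetUl _ _)).
- by rewrite -{1}(pright_supp_interval wI); apply/cle_pright/subsetUl.
- by rewrite -{1}(pright_supp_interval gI); apply/cle_pright/subsetUr.
move=> y yI wy gy; rewrite -(pright_supp_interval yI); apply: cle_pright.
by rewrite subUset !cle_supp.
Qed.

Lemma supp_join w g x : inI w -> inI g -> is_join r u v w g x ->
  supp r x = supp r w :|: supp r g.
Proof.
move=> wI gI [xI wx gx xmin]; have [yI wy gy _] := is_join_pright wI gI.
apply/eqP; rewrite eqEsubset subUset (cle_supp wx) (cle_supp gx) !andbT.
exact: subset_trans (cle_supp (xmin _ yI wy gy)) (supp_pright _ _).
Qed.

Lemma is_meet_pright K L :
  inP K -> inP L -> is_meet r u v (pr K v) (pr L v) (pr (K :&: L) v).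
Proof.
move=> /andP [uK Kv] /andP [uL _]; split.
- apply: pright_in_interval.
  by rewrite /in_PIJ subsetI uK uL (subset_trans (subsetIl K L) Kv).
- exact/cle_pright/subsetIl.
- exact/cle_pright/subsetIr.
move=> y yI yK yL; rewrite -(pright_supp_interval yI); apply: cle_pright.
have yK' := subset_trans (cle_supp yK) (supp_pright _ _).
by rewrite subsetI yK' (subset_trans (cle_supp yL) (supp_pright _ _)).
Qed.

Lemma pright_fibre_max w (M := supp r v :\: Des r (pleft r (supp r w) v)) : inI w ->
  [/\ inP M, pr M v = w & forall K, inP K -> pr K v = w -> K \subset M].
Proof.
move=> wI; have /andP [uw wv] := supp_in_PIJ wI.
have [_ wD] := proj1 (pright_eqP _ _ _) (pright_supp_interval wI).
have eq_M : M = supp r v :&: ~: Des r (v / w).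
  by rewrite /M /pleft pright_supp_interval // setDE.
have wM : supp r w \subset M by rewrite eq_M subsetI wv wD.
split.
- by rewrite /in_PIJ (subset_trans uw wM) /M subsetDl.
- by apply/pright_eqP; split=> //; rewrite eq_M subsetIr.
by move=> K /andP [_ Kv] /pright_eqP [_ KD]; rewrite eq_M subsetI Kv.
Qed.

End Interval.

End CoxeterSystem.

Theorem mainTheorem12 (W : groupType) (S : finType) (r : S -> W)
  (HC : coxeter_system r) (u v : W) (Huv : cle r u v) :
  let I := supp r u in
  let J := supp r v in
  let F := supp r in
  let G := fun K : {set S} => pright r K v in
  let inI := in_interval r u v in
  let inP := in_PIJ I J in
  (* F and G_v are well defined *)
  (forall w, inI w -> inP (F w)) /\
  (forall K, inP K -> inI (G K)) /\
  (* (a) *)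
  (forall w, inI w -> G (F w) = w) /\
  (forall K, inP K -> F (G K) \subset K) /\
  (* (b) *)
  (forall w g, inI w -> inI g -> F w = F g -> w = g) /\
  (forall w g, inI w -> inI g -> cle r w g -> F w \subset F g) /\
  (forall w g, inI w -> inI g ->
     (exists x, is_join r u v w g x) /\
     (forall x, is_join r u v w g x -> F x = F w :|: F g)) /\
  (* (c) *)
  (forall w, inI w -> exists K, inP K /\ G K = w) /\
  (forall K L, inP K -> inP L -> K \subset L -> cle r (G K) (G L)) /\
  (forall K L, inP K -> inP L -> is_meet r u v (G K) (G L) (G (K :&: L))) /\
  (* (d) *)
  (forall w, inI w ->
     (forall K L, inP K -> inP L -> G K = w -> G L = w ->
        G (K :|: L) = w /\ G (K :&: L) = w) /\
     (inP (F w) /\ G (F w) = w /\ (forall K, inP K -> G K = w -> F w \subset K)) /\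
     (let M := J :\: Des r (pleft r (F w) v) in
      inP M /\ G M = w /\ (forall K, inP K -> G K = w -> K \subset M))).
Proof.
case: HC => m [Hm Hrel Hgen Huniv]; cbv beta zeta.
split; first exact: supp_in_PIJ.
split; first exact: pright_in_interval.
split; first exact: pright_supp_interval.
split; first by move=> K _; exact: supp_pright.
split; first exact: supp_inj_interval.
split; first by move=> w g _ _; exact: cle_supp.
split.
  by move=> w g wI gI; split; [eexists; exact: is_join_pright | move=> x; exact: supp_join].
split; first exact: pright_surj_interval.
split; first by move=> K L _ _; exact: cle_pright.
split; first exact: is_meet_pright.
move=> w wI; split.
  by move=> K L _ _ Kw Lw; split; [exact: pright_setU | exact: pright_setI].
split.
  split; first exact: supp_in_PIJ.
  by split; [exact: (pright_supp_interval wI) | move=> K _ <-; exact: supp_pright].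
by have [] := pright_fibre_max Hm Hrel Hgen Huniv wI.
Qed.
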